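(* Let $X$ be a topological space and let $\mathcal{A}(X)\subset C(X)$ be a family with the $D$-property. Assume that the activation function $\sigma:\mathbb{R}\to\mathbb{R}$ satisfies the univariate universal approximation property. Let $m\ge 1$. Then for every compact set $K\subset X$, every $g\in C(K;\mathbb{R}^m)$ and every $\varepsilon>0$ there exists $H\in\mathcal{N}_1^{(m)}(\sigma)$ with $\sup_{x\in K}\|g(x)-H(x)\|_{\mathbb{R}^m}<\varepsilon$. Consequently, for every $l\ge1$, the class $\mathcal{N}_l^{(m)}(\sigma)$ is dense in $C(X;\mathbb{R}^m)$ (i.e. for every compact $K\subset X$, the restrictions to $K$ of elements of $\mathcal{N}_l^{(m)}(\sigma)$ are dense in $C(K;\mathbb{R}^m)$ with respect to the uniform norm on $K$).
   Context: $C(X)$ denotes the continuous real-valued functions on $X$, and $C(X;\mathbb{R}^m)$ the continuous maps $X\to\mathbb{R}^m$, topologized by uniform convergence on compact sets (seminorms $\|g\|_K=\sup_{x\in K}\|g(x)\|_{\mathbb{R}^m}$, $K$ compact, Euclidean norm). A family $\mathcal{A}(X)\subset C(X)$ (the ''basic family'' of admissible feature maps) has the $D$-property if for every compact $K\subset X$, every $g\in C(K)$ and every $\varepsilon>0$ there exist $M\in\mathbb{N}$, $f_1,\dots,f_M\in\mathcal{A}(X)$ and $u_1,\dots,u_M\in C(\mathbb{R})$ with $\max_{x\in K}|g(x)-\sum_{i=1}^M u_i(f_i(x))|<\varepsilon$. An activation $\sigma:\mathbb{R}\to\mathbb{R}$ satisfies the univariate universal approximation property if for every compact interval $[a,b]$,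 every $u\in C([a,b])$ and every $\varepsilon>0$ there are $N$ and $c_j,w_j,\theta_j\in\mathbb{R}$ with $\sup_{t\in[a,b]}|u(t)-\sum_{j=1}^N c_j\sigma(w_jt-\theta_j)|<\varepsilon$. For $l\ge1$, $m\ge1$, $\mathcal{N}_l^{(m)}(\sigma)$ (deep topological feedforward neural networks of depth $l$ with $m$ outputs, built from $\mathcal{A}(X)$) is the set of all maps $H:X\to\mathbb{R}^m$ of the form $H=T_{l+1}\circ\sigma\circ T_l\circ\sigma\circ\cdots\circ T_1\circ\sigma\circ T_0$, where $T_0(x)=(w_1f_1(x)-\theta_1,\dots,w_{k_0}f_{k_0}(x)-\theta_{k_0})$ with $f_i\in\mathcal{A}(X)$, $w_i,\theta_i\in\mathbb{R}$; $T_j(y)=A_jy-b_j$ are affine maps $\mathbb{R}^{k_{j-1}}\to\mathbb{R}^{k_j}$ for $j=1,\dots,l$; $T_{l+1}(y)=A_{l+1}y-b_{l+1}$ is an affine map $\mathbb{R}^{k_l}\to\mathbb{R}^m$; and $\sigma$ acts componentwise. For $l=1$ this is the same as maps $H(x)=A\sigma(T(x))-b$ with $T(x)=(w_1f_1(x)-\theta_1,\dots,w_rf_r(x)-\theta_r)$, $f_i\in\mathcal{A}(X)$, $A\in\mathbb{R}^{m\times r}$, $b\in\mathbb{R}^m$ (single hidden layer networks, since intermediate affine layers may be taken trivial). *)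

From HB Require Import structures.
From mathcomp Require Import all_boot all_order all_algebra.
From mathcomp Require Import all_classical all_reals all_analysis.
Set Implicit Arguments. Unset Strict Implicit. Unset Printing Implicit Defensive.
Import Order.TTheory GRing.Theory Num.Theory.
Import numFieldNormedType.Exports.
Local Open Scope classical_set_scope.
Local Open Scope ring_scope.

Definition enorm {R : realType} {m : nat} (v : 'rV[R]_m) : R :=
  Num.sqrt (\sum_(i < m) v 0 i ^+ 2).

Definition unif_close1 {T : Type} {R : realType} (K : set T) (g h : T -> R)
  (eps : R) : Prop :=
  exists2 d : R, d < eps & forall x, K x -> `|g x - h x| <= d.

Definition unif_close {T : Type} {R : realType} {m : nat} (K : set T)
  (g h : T -> 'rV[R]_m) (eps : R) : Prop :=
  exists2 d : R, d < eps & forall x, K x -> enorm (g x - h x) <= d.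

Definition D_property {R : realType} {X : topologicalType} (A : set (X -> R)) : Prop :=
  forall K : set X, compact K ->
  forall g : X -> R, {within K, continuous g} ->
  forall eps : R, 0 < eps ->
  exists M : nat, exists f : 'I_M -> (X -> R), exists u : 'I_M -> (R -> R),
    (forall i, A (f i)) /\ (forall i, continuous (u i)) /\
    unif_close1 K g (fun x => \sum_(i < M) u i (f i x)) eps.

Definition univ_UAP {R : realType} (sigma : R -> R) : Prop :=
  forall a b : R, forall u : R -> R,
  {within [set t | a <= t <= b], continuous u} ->
  forall eps : R, 0 < eps ->
  exists N : nat, exists c w theta : 'I_N -> R,
    unif_close1 [set t | a <= t <= b] u
      (fun t => \sum_(j < N) c j * sigma (w j * t - theta j)) eps.

(* Pre-activation maps after l intermediate affine layers:
   level 0 : x |-> T_0(x) = (w_i f_i(x) - theta_i)_i, f_i in A;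
   level l+1 : x |-> sigma(Phi x) *m A - b, with Phi at level l. *)
Fixpoint preact {R : realType} {X : topologicalType} (A : set (X -> R))
  (sigma : R -> R) (l k : nat) : set (X -> 'rV[R]_k) :=
  match l with
  | 0 => [set Phi | exists f : 'I_k -> (X -> R), exists w theta : 'I_k -> R,
            (forall i, A (f i)) /\
            Phi = fun x => \row_i (w i * f i x - theta i)]
  | l'.+1 => [set Phi | exists k' : nat, exists Phi' : X -> 'rV[R]_k',
            @preact R X A sigma l' k' Phi' /\
            exists (M : 'M[R]_(k', k)) (b : 'rV[R]_k),
            Phi = fun x => map_mx sigma (Phi' x) *m M - b]
  end.

(* N_l^{(m)}(sigma): networks with l hidden (sigma) layers and m outputs,
   H = T_out o sigma o T_{l-1} o sigma o ... o T_1 o sigma o T_0  (l >= 1). *)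
Definition deep_net {R : realType} {X : topologicalType} (A : set (X -> R))
  (sigma : R -> R) (l m : nat) (H : X -> 'rV[R]_m) : Prop :=
  exists k : nat, exists Phi : X -> 'rV[R]_k,
    @preact R X A sigma l.-1 k Phi /\
    exists (M : 'M[R]_(k, m)) (b : 'rV[R]_m),
      H = fun x => map_mx sigma (Phi x) *m M - b.

From Pilot Require Import Defs.
From HB Require Import structures.
From mathcomp Require Import all_boot all_order all_algebra.
From mathcomp Require Import all_classical all_reals all_analysis.
From mathcomp Require Import lra.
Set Implicit Arguments. Unset Strict Implicit. Unset Printing Implicit Defensive.
Import Order.TTheory GRing.Theory Num.Theory.
Import numFieldNormedType.Exports.
Local Open Scope classical_set_scope.
Local Open Scope ring_scope.

(* A continuous function on a compact set [K] is approximated on [K] by sums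
   [sum_i u_i (f_i x)] (D-property); each [u_i] lives on the bounded range of
   [f_i] over [K], so the univariate property of [sigma] turns [u_i o f_i]
   into a single hidden layer, and the layers add up.  Deeper networks reuse
   the same step with [u = id]: a hidden layer applied to a good depth-l
   approximation is a good depth-(l+1) approximation.  Vector-valued targets
   are handled coordinatewise, using that the Euclidean norm is bounded by
   the l1 norm. *)

Section NormBounds.
Variable R : realType.

Lemma sum_sqr_le_sqr_sum_norm n (F : 'I_n -> R) :
  \sum_(i < n) F i ^+ 2 <= (\sum_(i < n) `|F i|) ^+ 2.
Proof.
elim: n F => [|n IH] F; first by rewrite !big_ord0 expr2 mulr0.
rewrite !big_ord_recr /=.
have := IH (fun i => F (widen_ord (leqnSn n) i)) => /=.
have S0 : 0 <= \sum_(i < n) `|F (widen_ord (leqnSn n) i)| by apply: sumr_ge0.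
rewrite -(real_normK (num_real (F ord_max))).
have a0 : 0 <= `|F ord_max| by [].
move: S0 a0; set S := \sum_(i < n) _; set T := \sum_(i < n) _; set a := `|_|.
move=> S0 a0 h; nra.
Qed.

Lemma enorm_le_sum_norm m (v : 'rV[R]_m) : enorm v <= \sum_(i < m) `|v 0 i|.
Proof.
have h0 : 0 <= \sum_(i < m) `|v 0 i| by apply: sumr_ge0.
rewrite /enorm -(ger0_norm h0) -sqrtr_sqr ler_sqrt ?sqr_ge0 //.
exact: sum_sqr_le_sqr_sum_norm.
Qed.

Lemma norm_sumB_le n (F G : 'I_n -> R) (e : R) :
  (forall i, `|F i - G i| <= e) ->
  `|\sum_(i < n) F i - \sum_(i < n) G i| <= n%:R * e.
Proof.
move=> FGe; rewrite -sumrB; apply: le_trans (ler_norm_sum _ _ _) _.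
by apply: le_trans (ler_sum _ (fun i _ => FGe i)) _; rewrite sumr_const card_ord mulr_natl.
Qed.

Lemma natr_mul_div_lt n (e : R) : 0 < e -> n%:R * (e / (n%:R + 1)) < e.
Proof.
move=> e0; have n1 : 0 < n%:R + 1 :> R by rewrite ltr_wpDl.
by rewrite mulrA ltr_pdivrMr // mulrC ltr_pM2l // ltrDl.
Qed.

Lemma bounded_on_compact (X : topologicalType) (K : set X) (h : X -> R) :
  compact K -> {within K, continuous h} ->
  exists B : R, forall x, K x -> `|h x| <= B.
Proof.
move=> cK ch; have [M [_ HM]] := compact_bounded (continuous_compact ch cK).
exists (M + 1) => x Kx; apply: (HM (M + 1)); first by rewrite ltrDl.
by exists x.
Qed.

End NormBounds.

Section Preactivations.
Variables (R : realType) (X : topologicalType) (A : set (X -> R)) (sigma : R -> R).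

Local Notation preact l k := (@Defs.preact R X A sigma l k).

Lemma preact_size0 l : exists Phi, preact l 0 Phi.
Proof.
elim: l => [|l [Phi HP]].
  by eexists; exists (fun _ _ => 0), (fun _ => 0), (fun _ => 0); split; [case|].
exists (fun x => map_mx sigma (Phi x) *m (0 : 'M[R]_(0, 0)) - 0).
by exists 0%N, Phi; split => //; exists 0, 0.
Qed.

Lemma preact_cst l k (c : 'rV[R]_k) : preact l.+1 k (fun _ => c).
Proof.
have [Phi HP] := preact_size0 l.
exists 0%N, Phi; split => //; exists 0, (-c).
by apply/funext => x; rewrite mulmx0 sub0r opprK.
Qed.

Lemma preact_affine {l k k'} {Phi} (M : 'M[R]_(k, k')) c :
  preact l.+1 k Phi -> preact l.+1 k' (fun x => Phi x *m M - c).
Proof.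
move=> [k0 [P0 [HP [M0 [b ->]]]]].
exists k0, P0; split => //; exists (M0 *m M), (b *m M + c).
by apply/funext => x; rewrite mulmxBl mulmxA opprD addrA.
Qed.

Lemma preact_row_mx {l k1 k2} {P1 P2} :
  preact l k1 P1 -> preact l k2 P2 ->
  preact l (k1 + k2) (fun x => row_mx (P1 x) (P2 x)).
Proof.
elim: l k1 k2 P1 P2 => [|l IH] k1 k2 P1 P2.
  move=> [f1 [w1 [t1 [Af1 ->]]]] [f2 [w2 [t2 [Af2 ->]]]].
  pose glue T (a : 'I_k1 -> T) (b : 'I_k2 -> T) i :=
    match fintype.split i with inl j => a j | inr j => b j end.
  exists (glue _ f1 f2), (glue _ w1 w2), (glue _ t1 t2); split.
    by move=> i; rewrite /glue; case: (fintype.split i).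
  apply/funext => x; apply/rowP => i; rewrite [LHS]mxE /glue.
  by rewrite -[i]splitK; case: (fintype.split i) => j; rewrite unsplitK !mxE
    ?(unsplitK (inl j) : fintype.split (lshift k2 j) = inl j)
    ?(unsplitK (inr j) : fintype.split (rshift k1 j) = inr j).
move=> [k1' [Q1 [HQ1 [M1 [b1 ->]]]]] [k2' [Q2 [HQ2 [M2 [b2 ->]]]]].
exists (k1' + k2')%N, (fun x => row_mx (Q1 x) (Q2 x)); split; first exact: IH.
exists (block_mx M1 0 0 M2), (row_mx b1 b2); apply/funext => x.
by rewrite map_row_mx mul_row_block !mulmx0 addr0 add0r opp_row_mx add_row_mx.
Qed.

Lemma preact_mulmx l k k' Phi (M : 'M[R]_(k, k')) :
  preact l.+1 k Phi -> preact l.+1 k' (fun x => Phi x *m M).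
Proof.
move=> HPhi; rewrite (_ : (fun x => _) = fun x => Phi x *m M - 0).
  exact: preact_affine HPhi.
by apply/funext => x; rewrite subr0.
Qed.

Lemma preact_add l k P1 P2 :
  preact l.+1 k P1 -> preact l.+1 k P2 -> preact l.+1 k (fun x => P1 x + P2 x).
Proof.
move=> H1 H2.
rewrite (_ : (fun x => P1 x + P2 x) =
  fun x => row_mx (P1 x) (P2 x) *m col_mx 1%:M 1%:M).
  exact: preact_mulmx (preact_row_mx H1 H2).
by apply/funext => x; rewrite mul_row_col !mulmx1.
Qed.

Lemma preact_sum l k n (F : 'I_n -> X -> 'rV[R]_k) :
  (forall i, preact l.+1 k (F i)) -> preact l.+1 k (fun x => \sum_(i < n) F i x).
Proof.
elim: n F => [|n IH] F HF.
  under eq_fun do rewrite big_ord0; exact: preact_cst.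
under eq_fun do rewrite big_ord_recr /=.
by apply: preact_add; [exact: (IH (fun i => F (widen_ord (leqnSn n) i))) | exact: HF].
Qed.

Lemma preact_row l m (F : 'I_m -> X -> 'rV[R]_1) :
  (forall r, preact l.+1 1 (F r)) -> preact l.+1 m (fun x => \row_r F r x 0 0).
Proof.
move=> HF; rewrite (_ : (fun x => _) = fun x => \sum_(r < m) F r x *m delta_mx 0 r).
  by apply: preact_sum => r; apply: preact_mulmx.
apply/funext => x; apply/rowP => r'; rewrite summxE (bigD1 r') //= big1 => [|r].
  by rewrite addr0 !mxE big_ord1 mxE !eqxx mulr1.
by rewrite eq_sym => /negbTE nr; rewrite mxE big_ord1 mxE nr andbF mulr0.
Qed.

(* [psi] can be the common input of a layer of neurons at depth [l]. *)
Definition preact_ridge l (psi : X -> R) :=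
  forall N (w t : 'I_N -> R), preact l N (fun x => \row_j (w j * psi x - t j)).

Lemma preact_ridge0 f : A f -> preact_ridge 0 f.
Proof. by move=> Af N w t; exists (fun _ => f), w, t. Qed.

Lemma preact_ridgeS l (Psi : X -> 'rV[R]_1) :
  preact l.+1 1 Psi -> preact_ridge l.+1 (fun x => Psi x 0 0).
Proof.
move=> HPsi N w t.
rewrite (_ : (fun x => _) =
  fun x => Psi x *m (\matrix_(i < 1, j < N) w j) - \row_j t j).
  exact: preact_affine HPsi.
by apply/funext => x; apply/rowP => j; rewrite !mxE big_ord1 !mxE mulrC.
Qed.

Hypothesis hsigma : univ_UAP sigma.

Lemma hidden_layer_approx l psi (K : set X) (B : R) (u : R -> R) (e : R) :
  preact_ridge l psi -> (forall x, K x -> `|psi x| <= B) ->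
  {within [set t | - B <= t <= B], continuous u} -> 0 < e ->
  exists H, preact l.+1 1 H /\ forall x, K x -> `|u (psi x) - H x 0 0| <= e.
Proof.
move=> Rpsi Bpsi cu e0.
have [N [c [w [t [d dlt Hd]]]]] := hsigma cu e0.
exists (fun x => map_mx sigma (\row_j (w j * psi x - t j)) *m \col_j c j - 0).
split; first by exists N, (fun x => \row_j (w j * psi x - t j)); split;
  [exact: Rpsi | exists (\col_j c j), 0].
move=> x Kx; have /Hd : [set t | - B <= t <= B] (psi x) by rewrite /= -ler_norml; exact: Bpsi.
move=> /le_trans/(_ (ltW dlt)); congr (`|_ - _| <= _).
by rewrite subr0 mxE; apply: eq_bigr => j _; rewrite !mxE mulrC.
Qed.

End Preactivations.

Section ScalarApproximation.
Variables (R : realType) (X : topologicalType) (A : set (X -> R)) (sigma : R -> R).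
Hypotheses (hAcont : forall f, A f -> continuous f) (hD : D_property A)
  (hsigma : univ_UAP sigma).
Variables (K : set X) (cK : compact K).

Local Notation preact l k := (@Defs.preact R X A sigma l k).

Definition preact1_dense_on l := forall g : X -> R, {within K, continuous g} ->
  forall e, 0 < e -> exists H, preact l 1 H /\ forall x, K x -> `|g x - H x 0 0| <= e.

Lemma preact1_dense_on1 : preact1_dense_on 1.
Proof.
move=> g cg e e0; have e20 : 0 < e / 2 by rewrite divr_gt0.
have [M [f [u [Af [cu [d dlt Hd]]]]]] := hD cK cg e20.
pose e' := e / 2 / (M%:R + 1).
have e'0 : 0 < e' by rewrite !divr_gt0 // ltr_wpDl.
have Hi i : exists H, preact 1 1 H /\
    forall x, K x -> `|u i (f i x) - H x 0 0| <= e'.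
  have [B HB] := bounded_on_compact cK (continuous_subspaceT (hAcont (Af i))).
  have cui : {within [set t | - B <= t <= B], continuous u i}.
    exact: continuous_subspaceT (cu i).
  exact: (hidden_layer_approx hsigma (preact_ridge0 sigma (Af i)) HB cui e'0).
have [Hs HHs] := choice Hi.
exists (fun x => \sum_(i < M) Hs i x); split.
  exact: preact_sum (fun i => (HHs i).1).
move=> x Kx; rewrite summxE (splitr e).
apply: le_trans (ler_distD (\sum_(i < M) u i (f i x)) _ _) _; apply: lerD.
  exact: le_trans (Hd x Kx) (ltW dlt).
apply: le_trans (norm_sumB_le (fun i => (HHs i).2 x Kx)) _.
exact/ltW/natr_mul_div_lt.
Qed.

Lemma preact1_dense_onS l : preact1_dense_on l.+1 -> preact1_dense_on l.+2.
Proof.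
move=> IH g cg e e0; have e20 : 0 < e / 2 by rewrite divr_gt0.
have [Bg HBg] := bounded_on_compact cK cg.
have [Psi [HPsi CPsi]] := IH g cg _ e20.
have BPsi x : K x -> `|Psi x 0 0| <= Bg + e / 2.
  move=> Kx; rewrite -[Psi x 0 0](subKr (g x)).
  by apply: le_trans (ler_normB _ _) _; apply: lerD; [exact: HBg | exact: CPsi].
have cid : {within [set t | - (Bg + e / 2) <= t <= Bg + e / 2], continuous id}.
  by apply: continuous_subspaceT => t; exact: cvg_id.
have [H [HH CH]] := hidden_layer_approx hsigma (preact_ridgeS HPsi) BPsi cid e20.
exists H; split => // x Kx.
rewrite (splitr e); apply: le_trans (ler_distD (Psi x 0 0) _ _) _.
exact: lerD (CPsi x Kx) (CH x Kx).
Qed.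

Lemma preact1_dense_on_all l : preact1_dense_on l.+1.
Proof.
elim: l => [|l IH]; [exact: preact1_dense_on1 | exact: preact1_dense_onS].
Qed.

End ScalarApproximation.

Section VectorApproximation.
Variables (R : realType) (X : topologicalType) (A : set (X -> R)) (sigma : R -> R).
Hypotheses (hAcont : forall f, A f -> continuous f) (hD : D_property A)
  (hsigma : univ_UAP sigma).

Lemma preact_approx l m (K : set X) (g : X -> 'rV[R]_m) (eps : R) :
  compact K -> {within K, continuous g} -> 0 < eps ->
  exists H, @preact R X A sigma l.+1 m H /\ unif_close K g H eps.
Proof.
move=> cK cg eps0; pose e := eps / (m%:R + 1).
have e0 : 0 < e by rewrite divr_gt0 // ltr_wpDl.
have Hr r : exists H, @preact R X A sigma l.+1 1 H /\
    forall x, K x -> `|g x 0 r - H x 0 0| <= e.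
  apply: (preact1_dense_on_all hAcont hD hsigma cK) e0 => x.
  exact: continuous_comp (cg x) (@coord_continuous R 1 m 0 r _).
have [Hs HHs] := choice Hr.
exists (fun x => \row_r Hs r x 0 0); split; first exact: preact_row (fun r => (HHs r).1).
exists (m%:R * e); first exact: natr_mul_div_lt.
move=> x Kx; apply: le_trans (enorm_le_sum_norm _) _.
rewrite -[m in m%:R]card_ord mulr_natl -sumr_const; apply: ler_sum => r _.
by rewrite !mxE; exact: (HHs r).2.
Qed.

End VectorApproximation.

Lemma deep_net_preact (R : realType) (X : topologicalType) (A : set (X -> R))
  (sigma : R -> R) l m (H : X -> 'rV[R]_m) :
  @preact R X A sigma l.+1 m H -> @deep_net R X A sigma l.+1 m H.
Proof. by []. Qed.

Theorem theorem2p1 (R : realType) (X : topologicalType) (A : set (X -> R))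
  (sigma : R -> R) (m : nat)
  (hAcont : forall f, A f -> continuous f)
  (hD : D_property A)
  (hsigma : univ_UAP sigma)
  (hm : (1 <= m)%N) :
  (forall K : set X, compact K ->
   forall g : X -> 'rV[R]_m, {within K, continuous g} ->
   forall eps : R, 0 < eps ->
   exists H : X -> 'rV[R]_m, @deep_net R X A sigma 1 m H /\ unif_close K g H eps)
  /\
  (forall l : nat, (1 <= l)%N ->
   forall K : set X, compact K ->
   forall g : X -> 'rV[R]_m, {within K, continuous g} ->
   forall eps : R, 0 < eps ->
   exists H : X -> 'rV[R]_m, @deep_net R X A sigma l m H /\ unif_close K g H eps).
Proof.
have approx l K : compact K -> forall g : X -> 'rV[R]_m, {within K, continuous g} ->
    forall eps : R, 0 < eps ->
    exists H, @deep_net R X A sigma l.+1 m H /\ unif_close K g H eps.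
  move=> cK g cg eps eps0.
  have [H [netH closeH]] := preact_approx hAcont hD hsigma l cK cg eps0.
  by exists H; split; [exact: deep_net_preact | exact: closeH].
split; first exact: approx 0%N.
by move=> [//|l] _; exact: approx.
Qed.
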